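(* Let $G$ be a chordal graph and let $\mathcal{H}'=(V',\mathcal{E}')$ be a Berge-acyclic subhypergraph of $\mathcal{H}(G)$. If $F_1,\dots,F_k$ are the connected components of $G[\mathcal{E}']$, then each $F_i$ is a cactus and every cycle of each $F_i$ is a $3$-cycle.
   Context: All graphs are finite, simple and undirected. A graph is chordal if it has no induced cycle of length greater than $3$. A cactus is a connected graph in which every edge lies in at most one cycle. A hypergraph is a pair $(V,\mathcal{E})$ with $V$ finite and $\mathcal{E}$ a set of nonempty subsets of $V$; a subhypergraph $(V',\mathcal{E}')$ has $V'\subseteq V$, $\mathcal{E}'\subseteq\mathcal{E}$. A Berge-cycle is a sequence $(E_1,x_1,\dots,E_n,x_n)$, $n\ge 2$, of distinct hyperedges $E_i$ and distinct vertices $x_i$ with $x_i\in E_i\cap E_{i+1}$ for all $i$ (indices mod $n$); a hypergraph is Berge-acyclic if it has no Berge-cycle. For a graph $G=(V,E)$, $\mathcal{H}(G)=(V,\mathcal{E})$ is the hypergraph whose hyperedges are exactly the $3$-element vertex sets inducing a triangle in $G$. For $\mathcal{E}'\subseteq\mathcal{E}$, $G[\mathcal{E}']$ is the graph whose vertices are the vertices occurring in hyperedges of $\mathcal{E}'$ and in which $u,v$ are adjacent iff $\{u,v\}\subseteq e$ for some $e\in\mathcal{E}'$. *)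

From mathcomp Require Import all_boot.
Set Implicit Arguments. Unset Strict Implicit. Unset Printing Implicit Defensive.

Section Defs.
Variable T : finType.

Definition simple_graph (e : rel T) : Prop := symmetric e /\ irreflexive e.

Definition long_induced_cycle (e : rel T) (s : seq T) : bool :=
  [&& uniq s, 4 <= size s, cycle e s &
      all (fun x => all (fun y => e x y ==> ((next s x == y) || (prev s x == y))) s) s].

Definition chordal (e : rel T) : Prop := forall s : seq T, ~~ long_induced_cycle e s.

Definition triangle (e : rel T) (A : {set T}) : bool :=
  (#|A| == 3) && [forall x in A, forall y in A, (x != y) ==> e x y].

Definition tri_hyperedges (e : rel T) : {set {set T}} := [set A | triangle e A].

Definition sub_hypergraph_H (e : rel T) (V' : {set T}) (E' : {set {set T}}) : Prop :=
  E' \subset tri_hyperedges e /\ (forall A, A \in E' -> A \subset V').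

(* Berge-cycle (E_1,x_1,...,E_n,x_n), n >= 2, given as Es = [E_1..E_n], xs = [x_1..x_n]
   (indices mod n); the default x0 of nth is irrelevant since i < size xs *)
Definition berge_cycle (E' : {set {set T}}) (Es : seq {set T}) (xs : seq T) : Prop :=
  [/\ 2 <= size Es, size xs = size Es, uniq Es & uniq xs] /\
  all (fun A => A \in E') Es /\ (
      forall (i : nat) (x0 : T), i < size Es ->
        (nth x0 xs i \in nth set0 Es i) /\
        (nth x0 xs i \in nth set0 Es (i.+1 %% size Es))).

Definition berge_acyclic (E' : {set {set T}}) : Prop :=
  forall Es xs, ~ berge_cycle E' Es xs.

Definition GE_vertices (E' : {set {set T}}) : {set T} := \bigcup_(A in E') A.
Definition GE_adj (E' : {set {set T}}) : rel T :=
  fun u v => (u != v) && [exists A in E', (u \in A) && (v \in A)].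

(* graphs given by a vertex set V and an adjacency r (only used inside V) *)
Definition restr (V : {set T}) (r : rel T) : rel T :=
  fun u v => [&& u \in V, v \in V & r u v].

(* connected component of x in (V, r), as a vertex set; its edges are those of r *)
Definition component (V : {set T}) (r : rel T) (x : T) : {set T} :=
  [set y in V | connect (restr V r) x y].

Definition is_cycle (V : {set T}) (r : rel T) (s : seq T) : bool :=
  [&& uniq s, 3 <= size s, all (fun x => x \in V) s & cycle r s].

Definition cycle_edges (s : seq T) : {set {set T}} := [set [set x; next s x] | x in s].

Definition connected_graph (V : {set T}) (r : rel T) : Prop :=
  forall x y, x \in V -> y \in V -> connect (restr V r) x y.

Definition cactus (V : {set T}) (r : rel T) : Prop :=
  connected_graph V r /\
  forall (u v : T) (s1 s2 : seq T),
    u \in V -> v \in V -> r u v ->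
    is_cycle V r s1 -> is_cycle V r s2 ->
    [set u; v] \in cycle_edges s1 -> [set u; v] \in cycle_edges s2 ->
    cycle_edges s1 = cycle_edges s2.
End Defs.

From mathcomp Require Import all_boot.
Set Implicit Arguments. Unset Strict Implicit. Unset Printing Implicit Defensive.

(* Every cycle of G[E'] lies inside a single hyperedge.  Choosing for each edge of the
   cycle a hyperedge containing it gives a closed walk (E_1, x_1, ..., E_n, x_n) with
   distinct x_i; if the E_i are distinct it is a Berge-cycle, and otherwise splitting it
   at a repeated hyperedge gives two shorter closed walks, so by induction all E_i
   coincide.  Since hyperedges are triangles, every cycle is a 3-cycle spanning a
   hyperedge, and two cycles through a common edge span hyperedges sharing two vertices,
   which Berge-acyclicity forces to be equal. *)


Lemma cycle_nth (X : Type) (r : rel X) (p : seq X) x0 i :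
  cycle r p -> i < size p -> r (nth x0 p i) (nth x0 p (i.+1 %% size p)).
Proof.
case: p => [|a p] //= cyc lt_i.
have := pathP x0 cyc i; rewrite size_rcons -rcons_cons !nth_rcons /= lt_i => /(_ isT).
rewrite ltnS in lt_i; case: ltngtP lt_i => // [lt_ip | ->] _; first by rewrite modn_small.
by rewrite modnn.
Qed.

Lemma map_not_uniq_split (X Y : eqType) (f : X -> Y) (p : seq X) :
  ~~ uniq (map f p) ->
  exists s1 a s2 b s3, p = s1 ++ a :: s2 ++ b :: s3 /\ f a = f b.
Proof.
elim: p => [|y t IHt] //=; rewrite negb_and negbK.
case/orP=> [/mapP[b tb fyb] | /IHt[s1 [a [s2 [b [s3 [-> fab]]]]]]].
  by case/splitPr: tb => s2 s3; exists [::], y, s2, b, s3.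
by exists (y :: s1), a, s2, b, s3.
Qed.

Section BergeAcyclic.
Variables (T : finType) (E' : {set {set T}}).

(* A closed walk [:: (E_1, x_1); ...; (E_n, x_n)] has x_i in E_i and E_(i+1) (indices
   mod n) and distinct x_i: it is a Berge-cycle except that the E_i may repeat. *)
Definition hlink (a b : {set T} * T) : bool := (a.2 \in a.1) && (a.2 \in b.1).

Definition closed_walk (p : seq ({set T} * T)) : bool :=
  [&& cycle hlink p, all (fun a => a.1 \in E') p & uniq (map snd p)].

Lemma closed_walk_rot n p : closed_walk (rot n p) = closed_walk p.
Proof.
rewrite /closed_walk rot_cycle map_rot rot_uniq.
by have /perm_all-> : perm_eq (rot n p) p by rewrite perm_rot.
Qed.

Lemma closed_walk_split a b s1 s2 : a.1 = b.1 ->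
  closed_walk (a :: s1 ++ b :: s2) -> closed_walk (a :: s1) && closed_walk (b :: s2).
Proof.
move=> ab /and3P[cyc inE' uniq_p].
have link_ab x : hlink x a = hlink x b by rewrite /hlink ab.
move: cyc inE' uniq_p; rewrite /closed_walk /= rcons_cat cat_path /= !rcons_path.
rewrite all_cat map_cat cat_uniq mem_cat negb_or /=.
case/and4P=> -> lab -> la /and4P[-> -> -> ->] /and5P[/andP[-> _] -> _ -> ->].
by rewrite link_ab lab -link_ab la.
Qed.

Lemma closed_walk_berge_cycle p : closed_walk p -> 2 <= size p ->
  uniq (map fst p) -> berge_cycle E' (map fst p) (map snd p).
Proof.
case/and3P=> cyc inE' uniq_p size_p uniq_E.
split; first by rewrite !size_map.
split; first by rewrite all_map.
move=> i x0; rewrite size_map => lt_i.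
have mod_lt : i.+1 %% size p < size p by rewrite ltn_mod; case: (p) size_p.
rewrite !(nth_map (set0, x0)) //.
exact/andP/(cycle_nth (set0, x0) cyc lt_i).
Qed.

Hypothesis acyclic : berge_acyclic E'.

Lemma closed_walk_const p : closed_walk p -> {in p &, forall a b, a.1 = b.1}.
Proof.
elim: {p}_.+1 {-2}p (ltnSn (size p)) => // n IHn p size_p walk_p.
have [uniq_E | /map_not_uniq_split[s1 [a [s2 [b [s3 [def_p ab]]]]]]] :=
  boolP (uniq (map fst p)).
  have [size_le1 | size_ge2] := leqP (size p) 1.
    by case: p size_le1 {size_p walk_p uniq_E} => [|c [|]] // _ x y; rewrite !inE => /eqP-> /eqP->.
  by case: (acyclic (closed_walk_berge_cycle walk_p size_ge2 uniq_E)).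
have rot_p : rot (size s1) p = (a :: s2) ++ (b :: s3 ++ s1).
  by rewrite def_p rot_size_cat /= -catA.
have walk_q : closed_walk (a :: s2 ++ b :: s3 ++ s1).
  by rewrite -cat_cons -rot_p closed_walk_rot.
have mem_p x : x \in p = (x \in a :: s2) || (x \in b :: s3 ++ s1).
  by rewrite -mem_cat -rot_p mem_rot.
have size_q : size p = size (a :: s2) + size (b :: s3 ++ s1).
  by rewrite -size_cat -rot_p size_rot.
have lt_1 : size (a :: s2) < n.
  by rewrite -ltnS (leq_trans _ size_p) // size_q ltnS -[X in X < _]addn0 ltn_add2l.
have lt_2 : size (b :: s3 ++ s1) < n.
  by rewrite -ltnS (leq_trans _ size_p) // size_q ltnS -[X in X < _]add0n ltn_add2r.
case/andP: (closed_walk_split ab walk_q) => /(IHn _ lt_1) const_1 /(IHn _ lt_2) const_2.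
have {}const_1 x : x \in a :: s2 -> x.1 = a.1 by move/const_1; apply; apply: mem_head.
have {}const_2 x : x \in b :: s3 ++ s1 -> x.1 = a.1.
  by rewrite ab; move/const_2; apply; apply: mem_head.
by move=> x y; rewrite !mem_p => /orP[/const_1 | /const_2]-> /orP[/const_1 | /const_2]->.
Qed.

Lemma cycle_sub_hyperedge s : uniq s -> s != [::] -> cycle (GE_adj E') s ->
  exists2 A, A \in E' & {subset s <= A}.
Proof.
move=> uniq_s s_n0 cyc.
pose f u := odflt set0 [pick A in E' | (u \in A) && (next s u \in A)].
have f_edge u : u \in s -> [&& f u \in E', u \in f u & next s u \in f u].
  move=> s_u; case/andP: (next_cycle cyc s_u) => _ /existsP[A /andP[E'A uvA]].
  rewrite /f; case: pickP => [B /andP[-> ->] // | no_pick].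
  by have := no_pick A; rewrite E'A uvA.
pose p := [seq (f u, next s u) | u <- s].
have walk_p : closed_walk p.
  apply/and3P; split.
  - rewrite cycle_map; apply: (cycle_from_next uniq_s) => u s_u.
    rewrite /hlink /=; have s_nu : next s u \in s by rewrite mem_next.
    by case/and3P: (f_edge u s_u) => _ _ ->; case/and3P: (f_edge _ s_nu) => _ ->.
  - by apply/allP=> _ /mapP[u s_u ->]; case/and3P: (f_edge u s_u).
  - by rewrite -map_comp map_inj_uniq //; apply: (can_inj (prev_next uniq_s)).
have [u0 s_u0] : exists u0, u0 \in s by case: (s) s_n0 => // u0 t _; exists u0; apply: mem_head.
exists (f u0); first by case/and3P: (f_edge u0 s_u0).
move=> u s_u; have p_u : (f u, next s u) \in p by apply/mapP; exists u.
have p_u0 : (f u0, next s u0) \in p by apply/mapP; exists u0.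
have /= <- := closed_walk_const walk_p p_u p_u0.
by case/and3P: (f_edge u s_u).
Qed.

Lemma berge_acyclic_linear A1 A2 u v : A1 \in E' -> A2 \in E' -> u != v ->
  [set u; v] \subset A1 -> [set u; v] \subset A2 -> A1 = A2.
Proof.
move=> E'A1 E'A2 uv /subsetP uvA1 /subsetP uvA2; apply/eqP/negP => /negP A12.
apply: (acyclic (Es := [:: A1; A2]) (xs := [:: u; v])).
split; first by rewrite /= !inE A12 uv.
split; first by rewrite /= E'A1 E'A2.
have [u_uv v_uv] : u \in [set u; v] /\ v \in [set u; v] by rewrite !inE !eqxx orbT.
by move=> [|[|i]] x0 //= _; rewrite ?uvA1 ?uvA2.
Qed.

Hypothesis three_uniform : {in E', forall A : {set T}, #|A| = 3}.

Lemma cycle_size3 V s : is_cycle V (GE_adj E') s -> size s = 3 /\ [set x in s] \in E'.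
Proof.
case/and4P=> uniq_s size_s _ cyc.
have s_n0 : s != [::] by case: (s) size_s.
have [A E'A sA] := cycle_sub_hyperedge uniq_s s_n0 cyc.
have sub : [set x in s] \subset A by apply/subsetP=> y; rewrite inE; apply: sA.
have card_s : #|[set x in s]| = size s by rewrite cardsE; apply/card_uniqP.
have size3 : size s = 3.
  by apply/eqP; rewrite eqn_leq size_s -(three_uniform E'A) -card_s subset_leq_card.
suff -> : [set x in s] = A by [].
by apply/eqP; rewrite eqEcard sub card_s size3 three_uniform.
Qed.

End BergeAcyclic.

Lemma mem_cycle_edges3 (T : finType) (s : seq T) y z :
  uniq s -> size s = 3 -> y \in s -> z \in s -> y != z -> [set y; z] \in cycle_edges s.
Proof.
case: s => [|a [|b [|c [|]]]] //= /[swap] _ uniq_abc.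
have edge x : x \in [:: a; b; c] -> [set x; next [:: a; b; c] x] \in cycle_edges [:: a; b; c].
  by move=> abc_x; apply: imset_f.
have [/edge Eab /edge Ebc /edge Eca] : [/\ a \in [:: a; b; c], b \in [:: a; b; c] & c \in [:: a; b; c]].
  by rewrite !inE !eqxx !orbT.
move: uniq_abc Eab Ebc Eca; rewrite /next /= !inE negb_or andbT => /andP[/andP[ab ac] bc].
rewrite eqxx (eq_sym b) (eq_sym c a) (eq_sym c b) (negbTE ab) (negbTE ac) (negbTE bc) /= !eqxx.
move=> Eab Ebc Eca.
case/or3P=> /eqP-> /or3P[] /eqP->; rewrite ?eqxx // => _; by [| rewrite setUC].
Qed.

Lemma cycle_edges_sub (T : finType) (s : seq T) B : B \in cycle_edges s -> B \subset [set x in s].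
Proof.
by case/imsetP=> x s_x ->; apply/subsetP=> y; rewrite !inE => /orP[]/eqP->; rewrite ?mem_next.
Qed.

Lemma cycle_edges_sub3 (T : finType) V (E' : {set {set T}}) s1 s2 :
  is_cycle V (GE_adj E') s1 -> uniq s2 -> size s2 = 3 -> {subset s1 <= s2} ->
  cycle_edges s1 \subset cycle_edges s2.
Proof.
case/and4P=> _ _ _ cyc uniq_s2 size_s2 s12; apply/subsetP=> _ /imsetP[x s1x ->].
have /andP[x_nx _] := next_cycle cyc s1x.
by apply: mem_cycle_edges3; rewrite ?s12 ?mem_next.
Qed.

Lemma GE_adj_sym (T : finType) (E' : {set {set T}}) : symmetric (GE_adj E').
Proof.
move=> u v; rewrite /GE_adj eq_sym; congr andb.
by apply/existsP/existsP=> -[A /and3P[E'A uA vA]]; exists A; rewrite E'A uA vA.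
Qed.

Lemma component_connected (T : finType) (V : {set T}) (r : rel T) x :
  symmetric r -> x \in V -> connected_graph (component V r x) r.
Proof.
set F := component V r x => sym_r Vx.
have lift p y : y \in F -> path (restr V r) y p -> path (restr F r) y p.
  elim: p y => //= z p IHp y Fy /andP[yz pth].
  have Fz : z \in F.
    case/and3P: (yz) => _ Vz _; rewrite inE Vz.
    by case/setIdP: Fy => _ /connect_trans->; rewrite ?connect1.
  by rewrite IHp // andbT /restr Fy Fz; case/and3P: yz.
have conn_x y : y \in F -> connect (restr F r) x y.
  move=> Fy; have := Fy; rewrite inE => /andP[_ /connectP[p pth def_y]].
  by apply/connectP; exists p; rewrite // lift // inE Vx connect0.
have sym_F : connect_sym (restr F r).
  by apply: sym_connect_sym => u v; rewrite /restr sym_r andbCA.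
by move=> y z Fy Fz; rewrite (connect_trans _ (conn_x z Fz)) // sym_F conn_x.
Qed.

Theorem mainTheorem8 (T : finType) (e : rel T) (V' : {set T}) (E' : {set {set T}}) :
  simple_graph e -> chordal e ->
  sub_hypergraph_H e V' E' -> berge_acyclic E' ->
  forall x : T, x \in GE_vertices E' ->
    let F := component (GE_vertices E') (GE_adj E') x in
    cactus F (GE_adj E') /\
    (forall s : seq T, is_cycle F (GE_adj E') s -> size s = 3).
Proof.
move=> _ _ [/subsetP sub_tri _] acyclic x Vx F.
have three_uniform : {in E', forall A : {set T}, #|A| = 3}.
  by move=> A /sub_tri; rewrite inE => /andP[/eqP].
have cycle3 := cycle_size3 acyclic three_uniform.
split; last by move=> s /cycle3[].
split; first exact: component_connected (GE_adj_sym E') Vx.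
move=> u v s1 s2 _ _ /andP[uv _] cyc1 cyc2 /cycle_edges_sub uv_s1 /cycle_edges_sub uv_s2.
have [[size1 E'1] [size2 E'2]] := (cycle3 _ _ cyc1, cycle3 _ _ cyc2).
have s12 : [set y in s1] = [set y in s2] := berge_acyclic_linear acyclic E'1 E'2 uv uv_s1 uv_s2.
have mem_s12 y : (y \in s1) = (y \in s2) by rewrite -[LHS]inE s12 inE.
have [uniq1 uniq2] : uniq s1 /\ uniq s2 by case/and4P: cyc1; case/and4P: cyc2.
by apply/eqP; rewrite eqEsubset !(cycle_edges_sub3 cyc1, cycle_edges_sub3 cyc2) // => y;
  rewrite mem_s12.
Qed.
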